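(* Let $(Y,d_Y)$ and $(X,d_X)$ be proper geodesic metric spaces, $a>0$, $b\ge0$, $\lambda\ge1$, $C\ge0$, and let $f:Y\to X$ be a continuous map such that (i) $d_X(f(y),f(y'))\ge a\,d_Y(y,y')-b$ for all $y,y'\in Y$; (ii) for every $y,y'\in Y$ and every geodesic segment $[y,y']$, the path $f([y,y'])$ is rectifiable and $\operatorname{Length}(f([y,y']))\le\lambda\,d_X(f(y),f(y'))+C$. If $(X,d_X)$ is $\delta$-hyperbolic, then $(Y,d_Y)$ is $\delta''$-hyperbolic with $$\delta''=\frac4a\Big((6\lambda^2+14\lambda+5)\delta+\frac{4\lambda+3}{6\lambda+2}C+b\Big)\le\frac4a\big((6\lambda^2+14\lambda+5)\delta+C+b\big).$$
   Context: A metric space is $\delta$-hyperbolic if it is proper, geodesic, and every geodesic triangle is $\delta$-thin: for a geodesic triangle $\Delta=[x,y,z]$ let $T_\Delta$ be the metric tripod with branch lengths $\alpha,\beta,\gamma\ge0$ determined by $d(x,y)=\alpha+\beta$, $d(x,z)=\alpha+\gamma$, $d(y,z)=\beta+\gamma$, and $f_\Delta:\Delta\to T_\Delta$ the map which is an isometry on each side; $\Delta$ is $\delta$-thin if any two points with the same image under $f_\Delta$ are at distance $\le\delta$. *)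

From Stdlib Require Import Reals List.
From Coquelicot Require Import Coquelicot.
Open Scope R_scope.

Section Metric.
Context {X : Type} (d : X -> X -> R).

Definition is_metric : Prop :=
  (forall x y, 0 <= d x y) /\
  (forall x y, d x y = 0 <-> x = y) /\
  (forall x y, d x y = d y x) /\
  (forall x y z, d x z <= d x y + d y z).

Definition m_open (U : X -> Prop) : Prop :=
  forall x, U x -> exists r, 0 < r /\ forall y, d x y < r -> U y.

Definition m_compact (K : X -> Prop) : Prop :=
  forall (I : Type) (U : I -> X -> Prop),
    (forall i, m_open (U i)) ->
    (forall x, K x -> exists i, U i x) ->
    exists l : list I, forall x, K x -> exists i, In i l /\ U i x.

Definition proper_space : Prop :=
  forall x r, m_compact (fun y => d x y <= r).

(* g : [0, d x y] -> X is a geodesic segment from x to y (unit-speed isometric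
   parametrization; values outside [0, d x y] are irrelevant) *)
Definition geodesic (x y : X) (g : R -> X) : Prop :=
  g 0 = x /\ g (d x y) = y /\
  forall s t, 0 <= s <= d x y -> 0 <= t <= d x y -> d (g s) (g t) = Rabs (s - t).

Definition geodesic_space : Prop :=
  forall x y, exists g, geodesic x y g.

(* Tripod: points are (branch index, distance from center), with all branches
   glued at distance 0. Branch 0 <-> vertex x, 1 <-> y, 2 <-> z. *)
Definition tripod_eq (p q : nat * R) : Prop :=
  snd p = snd q /\ (fst p = fst q \/ snd p = 0).

(* image in the tripod of the point at distance t from the start vertex of a
   side going from vertex iu (branch length lu) to vertex iv *)
Definition tripod_image (iu iv : nat) (lu t : R) : nat * R :=
  if Rle_dec t lu then (iu, lu - t) else (iv, t - lu).

Section Triangle.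
Variables (x y z : X) (gxy gxz gyz : R -> X).

Definition br_x := (d x y + d x z - d y z) / 2.
Definition br_y := (d x y + d y z - d x z) / 2.

(* sides: 0 = [x,y], 1 = [x,z], 2 = [y,z] *)
Definition side_len (k : nat) : R :=
  match k with 0%nat => d x y | 1%nat => d x z | _ => d y z end.
Definition side_pt (k : nat) (t : R) : X :=
  match k with 0%nat => gxy t | 1%nat => gxz t | _ => gyz t end.
Definition side_img (k : nat) (t : R) : nat * R :=
  match k with
  | 0%nat => tripod_image 0 1 br_x t
  | 1%nat => tripod_image 0 2 br_x t
  | _ => tripod_image 1 2 br_y t
  end.

(* the geodesic triangle is delta-thin: points with the same image under
   f_Delta are at distance <= delta *)
Definition thin_triangle (delta : R) : Prop :=
  forall k1 k2 t1 t2, (k1 <= 2)%nat -> (k2 <= 2)%nat ->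
    0 <= t1 <= side_len k1 -> 0 <= t2 <= side_len k2 ->
    tripod_eq (side_img k1 t1) (side_img k2 t2) ->
    d (side_pt k1 t1) (side_pt k2 t2) <= delta.
End Triangle.

Definition hyperbolic (delta : R) : Prop :=
  proper_space /\ geodesic_space /\
  forall x y z gxy gxz gyz,
    geodesic x y gxy -> geodesic x z gxz -> geodesic y z gyz ->
    thin_triangle x y z gxy gxz gyz delta.

Fixpoint psum (p : R -> X) (t : nat -> R) (n : nat) : R :=
  match n with
  | O => 0
  | S m => psum p t m + d (p (t m)) (p (t (S m)))
  end.

Definition partition (a b : R) (t : nat -> R) (n : nat) : Prop :=
  t O = a /\ t n = b /\ forall i, (i < n)%nat -> t i <= t (S i).

Definition rectifiable (p : R -> X) (a b : R) : Prop :=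
  exists M, forall t n, partition a b t n -> psum p t n <= M.

Definition path_length (p : R -> X) (a b : R) : R :=
  real (Lub_Rbar (fun s => exists t n, partition a b t n /\ s = psum p t n)).
End Metric.

Definition m_continuous {Y X : Type} (dY : Y -> Y -> R) (dX : X -> X -> R)
  (f : Y -> X) : Prop :=
  forall y eps, 0 < eps -> exists eta, 0 < eta /\
    forall y', dY y y' < eta -> dX (f y) (f y') < eps.

From Stdlib Require Import Arith ZArith Reals Lia Psatz Lra Classical.
From Coquelicot Require Import Coquelicot.
Open Scope R_scope.

(* Claim 1 (stability in X).  If a continuous path c : [s0,s1] -> X satisfies
   the chain inequality "every polygonal sum of c on [s,r] is at most
   lam * d(c s, c r) + C", then every geodesic from c s0 to c s1 stays within
   Bc = (6 lam + 3/2) delta + C / (6 lam + 2) of the path.  The proof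
   considers the supremum M of the distances from geodesic points to the
   path, subdivides the path into 2^k pieces of small jump (an intermediate
   value argument), and uses the logarithmic shadow lemma of thin triangles.

   Claim 2 (slim images).  For a geodesic triangle in Y, every point of the
   image of one side lies within Hc = (lam + 2) Bc + (lam/2 + 2) delta + C/2 of
   the image of the other two sides.  Pulling back with the lower bound (i)
   shows that geodesic triangles in Y are ((Hc + b)/a)-slim, and D-slim
   triangles are 4D-thin, which gives delta'' = 4 (Hc + b) / a. *)

Section MetricFacts.
Context {X : Type} (d : X -> X -> R) (Hm : is_metric d).

Lemma dist_nonneg x y : 0 <= d x y.
Proof. destruct Hm as [H _]; auto. Qed.

Lemma dist_self x : d x x = 0.
Proof. destruct Hm as [_ [H _]]; apply H; auto. Qed.

Lemma dist_sym x y : d x y = d y x.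
Proof. destruct Hm as [_ [_ [H _]]]; auto. Qed.

Lemma dist_tri x y z : d x z <= d x y + d y z.
Proof. destruct Hm as [_ [_ [_ H]]]; auto. Qed.

Lemma dist_diff_le p x y : Rabs (d p x - d p y) <= d x y.
Proof.
  pose proof (dist_tri p x y). pose proof (dist_tri p y x).
  rewrite (dist_sym y x) in *. apply Rabs_le. lra.
Qed.

Lemma geodesic_isometry x y g : geodesic d x y g ->
  forall s t, 0 <= s <= d x y -> 0 <= t <= d x y -> d (g s) (g t) = Rabs (s - t).
Proof. intros [_ [_ H]]; auto. Qed.

Lemma geodesic_from_start x y g : geodesic d x y g ->
  forall s, 0 <= s <= d x y -> d x (g s) = s.
Proof.
  intros Hg s Hs. pose proof Hg as [H0 _]. rewrite <- H0.
  rewrite (geodesic_isometry x y g Hg); [|pose proof (dist_nonneg x y); lra|lra].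
  rewrite Rabs_left1; lra.
Qed.

Lemma geodesic_to_end x y g : geodesic d x y g ->
  forall s, 0 <= s <= d x y -> d (g s) y = d x y - s.
Proof.
  intros Hg s Hs. pose proof Hg as [_ [H1 _]]. rewrite <- H1 at 1.
  rewrite (geodesic_isometry x y g Hg); [|lra|pose proof (dist_nonneg x y); lra].
  rewrite Rabs_left1; lra.
Qed.

Definition reverse_path (g : R -> X) (L : R) : R -> X := fun s => g (L - s).

Lemma geodesic_reverse x y g : geodesic d x y g -> geodesic d y x (reverse_path g (d x y)).
Proof.
  intros [H0 [H1 H2]]. unfold geodesic, reverse_path. rewrite (dist_sym y x).
  split; [|split].
  - replace (d x y - 0) with (d x y) by ring. auto.
  - replace (d x y - d x y) with 0 by ring. auto.
  - intros s t Hs Ht. rewrite H2 by lra. rewrite Rabs_minus_sym. f_equal. ring.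
Qed.

Lemma geodesic_restrict x y g s0 s1 : geodesic d x y g -> 0 <= s0 -> s0 <= s1 -> s1 <= d x y ->
  d (g s0) (g s1) = s1 - s0 /\ geodesic d (g s0) (g s1) (fun s => g (s0 + s)).
Proof.
  intros Hg H0 H01 H1. pose proof Hg as [_ [_ G2]].
  assert (E : d (g s0) (g s1) = s1 - s0).
  { rewrite G2 by lra. rewrite Rabs_left1; lra. }
  split; auto. split; [|split].
  - f_equal; ring.
  - rewrite E. f_equal; ring.
  - intros s t Hs Ht. rewrite E in Hs, Ht. rewrite G2 by lra. f_equal; ring.
Qed.

Lemma psum_nonneg p t n : 0 <= psum d p t n.
Proof.
  induction n; simpl; [lra|]. pose proof (dist_nonneg (p (t n)) (p (t (S n)))). lra.
Qed.

End MetricFacts.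

Section PolygonalSums.
Context {X : Type} (d : X -> X -> R).

Lemma partition_bounds a b t n : partition a b t n -> forall i, (i <= n)%nat -> a <= t i <= b.
Proof.
  intros [H0 [Hn Hmono]].
  assert (L : forall i, (i <= n)%nat -> a <= t i).
  { induction i; intros Hi; [rewrite H0; lra|].
    specialize (Hmono i ltac:(lia)). specialize (IHi ltac:(lia)). lra. }
  assert (U : forall k i, (i + k = n)%nat -> t i <= b).
  { induction k; intros i Hi; [replace i with n by lia; rewrite Hn; lra|].
    specialize (IHk (S i) ltac:(lia)). specialize (Hmono i ltac:(lia)). lra. }
  intros i Hi. split; auto. apply (U (n - i)%nat); lia.
Qed.

Lemma psum_ext p q t u n :
  (forall i, (i <= n)%nat -> p (t i) = q (u i)) -> psum d p t n = psum d q u n.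
Proof.
  induction n; intros H; simpl; auto.
  rewrite IHn by (intros; apply H; lia). rewrite (H n), (H (S n)) by lia. auto.
Qed.

Definition prepend (s : R) (t : nat -> R) : nat -> R :=
  fun i => match i with O => s | S j => t j end.

Lemma psum_prepend p s t n : psum d p (prepend s t) (S n) = d (p s) (p (t O)) + psum d p t n.
Proof. induction n; simpl in *; [ring|]. rewrite IHn. ring. Qed.

Lemma partition_prepend s a b t n : s <= a -> partition a b t n ->
  partition s b (prepend s t) (S n).
Proof.
  intros Hs [H0 [Hn Hmono]]. split; [|split]; simpl; auto.
  intros i Hi. destruct i; simpl; [rewrite H0; auto|]. apply Hmono; lia.
Qed.

Definition two_points (a b : R) : nat -> R := fun i => match i with O => a | _ => b end.

Lemma partition_two_points a b : a <= b -> partition a b (two_points a b) 1.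
Proof. intros H. split; [|split]; simpl; auto. intros [|i] Hi; simpl; lia || lra. Qed.

Definition three_points (a m b : R) : nat -> R :=
  fun i => match i with O => a | 1%nat => m | _ => b end.

Lemma partition_three_points a m b : a <= m -> m <= b -> partition a b (three_points a m b) 2.
Proof. intros H1 H2. split; [|split]; simpl; auto. intros [|[|i]] Hi; simpl; lia || lra. Qed.

Lemma psum_le_path_length p a b t n :
  rectifiable d p a b -> partition a b t n -> psum d p t n <= path_length d p a b.
Proof.
  intros [M HM] Hp. unfold path_length.
  set (E := fun s => exists t n, partition a b t n /\ s = psum d p t n).
  destruct (Lub_Rbar_correct E) as [Hub Hlub].
  assert (H1 : Rbar_le (psum d p t n) (Lub_Rbar E)) by (apply Hub; exists t, n; auto).
  assert (H2 : Rbar_le (Lub_Rbar E) M).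
  { apply Hlub. intros x [t' [n' [Hp' ->]]]. simpl. apply HM; auto. }
  destruct (Lub_Rbar E); simpl in *; auto; contradiction.
Qed.

End PolygonalSums.
Lemma ivt_interval (phi : R -> R) (a b y : R) : a <= b ->
  (forall x, a <= x <= b -> forall eps, 0 < eps -> exists eta, 0 < eta /\
     forall x', a <= x' <= b -> Rabs (x - x') < eta -> Rabs (phi x - phi x') < eps) ->
  phi a <= y -> y <= phi b -> exists x, a <= x <= b /\ phi x = y.
Proof.
  intros Hab Hc Ha Hb.
  set (E := fun x => a <= x <= b /\ phi x <= y).
  assert (HB : bound E) by (exists b; intros x [Hx _]; lra).
  assert (HE : exists x, E x) by (exists a; split; [lra|auto]).
  (* s = sup E is the crossing point *)
  destruct (completeness E HB HE) as [s [Hub Hlub]].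
  assert (Has : a <= s) by (apply Hub; split; [lra|auto]).
  assert (Hsb : s <= b) by (apply Hlub; intros x [Hx _]; lra).
  exists s. split; [lra|].
  destruct (Rtotal_order (phi s) y) as [Hlt|[Heq|Hgt]]; auto; exfalso.
  - (* phi s < y: points slightly right of s still belong to E *)
    destruct (Rle_lt_or_eq_dec s b Hsb) as [Hs|Hs]; [|subst s; lra].
    destruct (Hc s (conj Has Hsb) (y - phi s)) as [eta [Heta Hh]]; [lra|].
    set (x' := Rmin b (s + eta/2)).
    assert (Hx' : s < x' <= b) by (unfold x'; apply Rmin_case_strong; intros; lra).
    assert (Hclose : Rabs (s - x') < eta).
    { rewrite Rabs_left1 by lra. revert Hx'. unfold x'. apply Rmin_case_strong; intros; lra. }
    specialize (Hh x' ltac:(lra) Hclose). apply Rabs_def2 in Hh.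
    assert (Hin : E x') by (split; lra). specialize (Hub x' Hin). lra.
  - (* y < phi s: s - eta/2 is already an upper bound of E *)
    destruct (Rle_lt_or_eq_dec a s Has) as [Hs|Hs]; [|subst s; lra].
    destruct (Hc s (conj Has Hsb) (phi s - y)) as [eta [Heta Hh]]; [lra|].
    assert (Hup : is_upper_bound E (Rmax a (s - eta/2))).
    { intros x [Hx1 Hx2]. destruct (Rle_or_lt x (Rmax a (s - eta/2))) as [Hx|Hx]; auto.
      assert (x <= s) by (apply Hub; split; auto).
      assert (s - eta/2 < x) by (revert Hx; apply Rmax_case_strong; intros; lra).
      assert (Hclose : Rabs (s - x) < eta) by (rewrite Rabs_right; lra).
      specialize (Hh x ltac:(lra) Hclose). apply Rabs_def2 in Hh. lra. }
    specialize (Hlub _ Hup). revert Hlub. apply Rmax_case_strong; intros; lra.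
Qed.

Definition triangles_thin {X : Type} (d : X -> X -> R) (delta : R) : Prop :=
  forall x y z gxy gxz gyz, geodesic d x y gxy -> geodesic d x z gxz -> geodesic d y z gyz ->
    thin_triangle d x y z gxy gxz gyz delta.

Definition on_other_sides {X : Type} (d : X -> X -> R) (x y z : X) (gxz gyz : R -> X) (p : X)
  : Prop :=
  (exists s, 0 <= s <= d x z /\ p = gxz s) \/ (exists s, 0 <= s <= d y z /\ p = gyz s).

Lemma hyperbolic_const_nonneg {X : Type} (d : X -> X -> R) (Hm : is_metric d) delta :
  hyperbolic d delta -> forall p : X, 0 <= delta.
Proof.
  intros [_ [Hg Ht]] p. destruct (Hg p p) as [g G].
  assert (H : d (g 0) (g 0) <= delta).
  { apply (Ht _ _ _ _ _ _ G G G 0%nat 0%nat 0 0); simpl; try lia;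
      rewrite ?dist_self by auto; try lra. split; auto. }
  rewrite dist_self in H by auto. exact H.
Qed.

Section ThinTriangles.
Context {X : Type} (d : X -> X -> R) (Hm : is_metric d) (delta : R)
  (Hthin : triangles_thin d delta) (Hgeo : geodesic_space d).

Lemma thin_slim x y z gxy gxz gyz :
  geodesic d x y gxy -> geodesic d x z gxz -> geodesic d y z gyz ->
  forall t, 0 <= t <= d x y ->
  exists p, on_other_sides d x y z gxz gyz p /\ d (gxy t) p <= delta.
Proof.
  intros H1 H2 H3 t Ht. pose proof (Hthin _ _ _ _ _ _ H1 H2 H3) as T.
  pose proof (dist_tri d Hm x y z). pose proof (dist_tri d Hm y x z).
  pose proof (dist_tri d Hm x z y).
  rewrite (dist_sym d Hm y x), (dist_sym d Hm z y) in *.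
  unfold br_x, br_y, on_other_sides in *.
  destruct (Rle_dec t (br_x d x y z)) as [Hle|Hgt]; unfold br_x in *.
  - (* t is before the internal point: compare with [x,z] *)
    exists (gxz t). split; [left; exists t; split; auto; lra|].
    apply (T 0%nat 1%nat t t); simpl; try lia; try lra.
    unfold tripod_image, br_x. destruct (Rle_dec _ _); [|contradiction]. split; auto.
  - (* otherwise compare with [y,z] *)
    exists (gyz (d x y - t)). split; [right; exists (d x y - t); split; auto; lra|].
    apply (T 0%nat 2%nat t (d x y - t)); simpl; try lia; try lra.
    unfold tripod_image, br_x, br_y. destruct (Rle_dec t _); [contradiction|].
    destruct (Rle_dec (d x y - t) _) as [Hq|Hq]; [|exfalso; apply Hq; lra].
    split; simpl; auto. lra.
Qed.

Lemma thin_internal_points x y z gxy gxz gyz :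
  geodesic d x y gxy -> geodesic d x z gxz -> geodesic d y z gyz ->
  d (gxy (br_x d x y z)) (gxz (br_x d x y z)) <= delta /\
  d (gxy (br_x d x y z)) (gyz (br_y d x y z)) <= delta.
Proof.
  intros H1 H2 H3. pose proof (Hthin _ _ _ _ _ _ H1 H2 H3) as T.
  pose proof (dist_tri d Hm x y z). pose proof (dist_tri d Hm y x z).
  pose proof (dist_tri d Hm x z y).
  rewrite (dist_sym d Hm y x), (dist_sym d Hm z y) in *.
  split.
  - apply (T 0%nat 1%nat); simpl; try lia; try (unfold br_x; lra).
    unfold tripod_image. destruct (Rle_dec _ _) as [_|N]; [|exfalso; apply N; lra].
    split; auto.
  - apply (T 0%nat 2%nat); simpl; try lia; try (unfold br_x, br_y; lra).
    unfold tripod_image. destruct (Rle_dec (br_x d x y z) _) as [_|N]; [|exfalso; apply N; lra].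
    destruct (Rle_dec (br_y d x y z) _) as [_|N]; [|exfalso; apply N; lra].
    split; simpl; [ring|right; ring].
Qed.

(* Logarithmic shadow lemma: a geodesic joining the ends of a chain of at
   most 2^k points with consecutive jumps <= g stays within
   k delta + g/2 of the chain (induction on k, splitting the chain in half). *)
Lemma chain_shadow : 0 <= delta -> forall k (x : nat -> X) N g, (N <= 2 ^ k)%nat -> 0 <= g ->
  (forall i, (i < N)%nat -> d (x i) (x (S i)) <= g) ->
  forall gg, geodesic d (x O) (x N) gg -> forall s, 0 <= s <= d (x O) (x N) ->
  exists i, (i <= N)%nat /\ d (gg s) (x i) <= INR k * delta + g / 2.
Proof.
  intros Hd. induction k; intros x N g HN Hg Hgap gg Hgg s Hs.
  - simpl in HN. destruct N as [|[|N]]; try lia.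
    + exists O. split; auto. rewrite dist_self in Hs by auto.
      replace s with 0 by lra. destruct Hgg as [G0 _]. rewrite G0, dist_self by auto. simpl. lra.
    + specialize (Hgap O ltac:(lia)).
      pose proof (geodesic_from_start d Hm _ _ _ Hgg s Hs).
      pose proof (geodesic_to_end d Hm _ _ _ Hgg s Hs).
      destruct (Rle_dec s (d (x O) (x 1%nat) / 2)).
      * exists O. split; [lia|]. rewrite dist_sym by auto. simpl. lra.
      * exists 1%nat. split; [lia|]. simpl. lra.
  - destruct (le_lt_dec N (2 ^ k)) as [HN'|HN'].
    { destruct (IHk x N g HN' Hg Hgap gg Hgg s Hs) as [i [Hi Hd']].
      exists i. split; auto. rewrite S_INR. nra. }
    (* split the chain at j = 2^k and use the triangle (x 0, x j, x N) *)
    set (j := (2 ^ k)%nat) in *.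
    assert (HNj : (N - j <= 2 ^ k)%nat) by (simpl in HN; unfold j; lia).
    destruct (Hgeo (x O) (x j)) as [g1 Hg1].
    destruct (Hgeo (x N) (x j)) as [g2 Hg2].
    destruct (thin_slim _ _ _ _ _ _ Hgg Hg1 Hg2 s Hs) as [p [[[s' [Hs' ->]]|[s' [Hs' ->]]] Hp]].
    + destruct (IHk x j g (le_n _) Hg ltac:(intros i Hi; apply Hgap; unfold j in *; lia)
        g1 Hg1 s' Hs') as [i [Hi Hd']].
      exists i. split; [lia|]. rewrite S_INR.
      pose proof (dist_tri d Hm (gg s) (g1 s') (x i)). lra.
    + set (x' := fun i => x (j + i)%nat).
      assert (Hx0 : x' O = x j) by (unfold x'; f_equal; lia).
      assert (HxN : x' (N - j)%nat = x N) by (unfold x'; f_equal; lia).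
      pose proof (geodesic_reverse d Hm _ _ _ Hg2) as Hr. rewrite <- Hx0, <- HxN in Hr.
      assert (Hs'' : 0 <= d (x N) (x j) - s' <= d (x' O) (x' (N - j)%nat)).
      { rewrite Hx0, HxN, (dist_sym d Hm (x j)). lra. }
      destruct (IHk x' (N - j)%nat g HNj Hg ltac:(intros i Hi; unfold x';
           replace (j + S i)%nat with (S (j + i)) by lia; apply Hgap; lia) _ Hr _ Hs'')
        as [i [Hi Hd']].
      exists (j + i)%nat. split; [lia|]. rewrite S_INR.
      unfold reverse_path in Hd'. rewrite ?Hx0, ?HxN in Hd'.
      replace (d (x N) (x j) - (d (x N) (x j) - s')) with s' in Hd' by ring.
      unfold x' in Hd'. pose proof (dist_tri d Hm (gg s) (g2 s') (x (j + i)%nat)). lra.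
Qed.

End ThinTriangles.
(* Subdividing a path whose polygonal sums are bounded by W into at most K
   pieces with jumps <= eta, provided W < K eta: greedily cut where the
   distance to the last cut point first reaches eta (intermediate values). *)
Lemma fine_partition {X : Type} (d : X -> X -> R) (Hm : is_metric d) (c : R -> X) (lo hi : R)
  (Hc : forall s, lo <= s <= hi -> forall eps, 0 < eps -> exists eta, 0 < eta /\
        forall s', lo <= s' <= hi -> Rabs (s - s') < eta -> d (c s) (c s') < eps)
  (eta : R) : 0 < eta -> forall K s W, lo <= s <= hi ->
  (forall tau n, partition s hi tau n -> psum d c tau n <= W) -> W < INR K * eta ->
  exists tau n, partition s hi tau n /\
    (forall i, (i < n)%nat -> d (c (tau i)) (c (tau (S i))) <= eta) /\ (n <= K)%nat.
Proof.
  intros Heta. induction K; intros s W Hs HW HK.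
  { specialize (HW _ _ (partition_two_points s hi ltac:(lra))).
    pose proof (psum_nonneg d Hm c (two_points s hi) 1). simpl in HK. lra. }
  destruct (classic (exists s', s <= s' <= hi /\ eta < d (c s) (c s'))) as [[s' [Hs' Hd]]|Hno].
  - (* cut at the first s1 with d (c s) (c s1) = eta, and recurse with budget W - eta *)
    destruct (ivt_interval (fun x => d (c s) (c x)) s s' eta ltac:(lra)) as [s1 [Hs1 E1]];
      simpl; rewrite ?dist_self by auto; try lra.
    { intros x Hx eps Heps. destruct (Hc x ltac:(lra) eps Heps) as [e [He Hh]].
      exists e. split; auto. intros x' Hx' Hxx. specialize (Hh x' ltac:(lra) Hxx).
      pose proof (dist_diff_le d Hm (c s) (c x) (c x')). lra. }
    destruct (IHK s1 (W - eta) ltac:(lra)) as [tau [n [Hp [Hg Hn]]]].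
    { intros tau n Hp. pose proof (HW _ _ (partition_prepend s s1 hi tau n ltac:(lra) Hp)) as H.
      rewrite psum_prepend in H. destruct Hp as [H0 _]. rewrite H0 in H. lra. }
    { rewrite S_INR in HK. lra. }
    exists (prepend s tau), (S n).
    split; [apply (partition_prepend s s1 hi); auto; lra|]. split; [|lia].
    intros [|i] Hi; simpl; [destruct Hp as [H0 _]; rewrite H0, E1; lra|]. apply Hg; lia.
  - (* the whole remaining path is within eta of c s: a single piece *)
    exists (two_points s hi), 1%nat. split; [apply partition_two_points; lra|]. split; [|lia].
    intros [|i] Hi; [|lia]. simpl.
    destruct (Rle_or_lt (d (c s) (c hi)) eta) as [H|H]; auto.
    exfalso. apply Hno. exists hi. split; [lra|auto].
Qed.

Lemma pow2_ge_succ n : INR n + 1 <= 2 ^ n.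
Proof.
  induction n as [|n IH]; [simpl; lra|]. rewrite S_INR. simpl pow. pose proof (pos_INR n). lra.
Qed.

Lemma pow2_between x : 1 <= x -> exists k, x <= 2 ^ k <= 2 * x.
Proof.
  intros H. destruct (archimed x) as [Hu _].
  assert (exists N, x <= INR N) as [N HN].
  { exists (Z.to_nat (up x)). rewrite INR_IZR_INZ, Z2Nat.id; [lra|].
    apply le_IZR. simpl. lra. }
  assert (HxN : x <= 2 ^ N) by (pose proof (pow2_ge_succ N); lra).
  clear HN Hu. revert x H HxN. induction N; intros x H1 H2; [exists O; simpl in *; lra|].
  destruct (Rle_or_lt x (2 ^ N)) as [H|H]; [apply IHN; auto|].
  exists (S N). simpl in *. lra.
Qed.

Lemma four_k_le_pow2 k : 4 * INR k <= 2 ^ k + 4.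
Proof.
  destruct k as [|[|k]]; [simpl; lra|simpl; lra|].
  pose proof (pow2_ge_succ k). rewrite !S_INR. simpl pow. pose proof (pos_INR k). lra.
Qed.

(* The number 2^k of pieces used in Claim 1: comparable with lam, and k is
   small compared with 2^k. *)
Lemma subdivision_exponent lam : 1 <= lam -> exists k : nat,
  4*lam+2 <= 2 ^ k /\ 2 ^ k <= 8*lam+4 /\ INR k <= 2 ^ k / 4 + 1.
Proof.
  intros H. destruct (pow2_between (4*lam+2) ltac:(lra)) as [k Hk].
  exists k. pose proof (four_k_le_pow2 k). repeat split; lra.
Qed.

Definition stability_const (delta lam C : R) : R := (6*lam + 3/2)*delta + C/(6*lam+2).

Definition slim_const (lam C delta : R) : R :=
  (6 * lam ^ 2 + 14 * lam + 5) * delta + (4 * lam + 3) / (6 * lam + 2) * C.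

Lemma slim_const_eq lam C delta : 1 <= lam ->
  (lam + 2) * stability_const delta lam C + (lam / 2 + 2) * delta + C / 2 = slim_const lam C delta.
Proof. intros H. unfold slim_const, stability_const. field. lra. Qed.

(* The numerical heart of Claim 1, with P = 2^k. *)
Lemma exponent_ineq lam P k : 1 <= lam -> 4*lam+2 <= P -> P <= 8*lam+4 -> 0 <= k -> k <= P/4 + 1 ->
  (6*lam + 3/2) * ((P - 1) - lam) >= (P - 1) * (2 + k) + 4 * lam.
Proof.
  intros H1 H2 H3 H4 H5.
  assert ((P-1)*(2+k) <= (P-1)*(3 + P/4)) by (apply Rmult_le_compat_l; lra).
  nra.
Qed.

(* Solving for M the inequality produced by the geometric argument of Claim 1. *)
Lemma stability_algebra delta lam C (k : nat) M e D :
  0 <= delta -> 1 <= lam -> 0 <= C ->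
  4*lam+2 <= 2 ^ k -> 2 ^ k <= 8*lam+4 -> INR k <= 2 ^ k / 4 + 1 -> 0 < e ->
  M - e < (2 + INR k) * delta + (lam * D + C + e) / (2 * (2 ^ k - 1)) + e ->
  D < 2 * M + 2 * e + 2 * (4 * delta + 3 * e) ->
  M <= stability_const delta lam C + (8*lam + 1 + 4*(2 ^ k - 1)) / (2*(2 ^ k - 1) - 2*lam) * e.
Proof.
  intros Hd Hlam HC H1 H2 H3 He HM HD.
  set (P := 2 ^ k) in *. set (S := P - 1).
  assert (HS : 4*lam + 1 <= S) by (unfold S; lra).
  pose proof (exponent_ineq lam P (INR k) Hlam H1 H2 (pos_INR k) H3) as Hkey. fold S in Hkey.
  set (Q := 2*S - 2*lam).
  assert (HQ : 6*lam+2 <= Q) by (unfold Q; lra).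
  assert (HM2 : 2*S*M < 2*S*(2 + INR k)*delta + lam * D + C + e + 2*S*e + 2*S*e).
  { change (2 * (P - 1)) with (2 * S) in HM.
    apply (Rmult_lt_compat_l (2*S)) in HM; [|lra].
    replace (2 * S * ((2 + INR k) * delta + (lam * D + C + e) / (2 * S) + e)) with
      (2 * S * (2 + INR k) * delta + (lam * D + C + e) + 2*S*e) in HM by (field; lra). lra. }
  assert (HlD : lam * D <= lam * (2 * M + 2 * e + 2 * (4 * delta + 3 * e)))
    by (apply Rmult_le_compat_l; lra).
  assert (HB1 : 2*S*(2+INR k)*delta + 8*lam*delta <= Q * ((6*lam + 3/2)*delta)).
  { unfold Q. assert (0 <= delta * ((6 * lam + 3 / 2) * (S - lam) - (S * (2 + INR k) + 4 * lam)))
      by (apply Rmult_le_pos; lra). nra. }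
  assert (HB2 : C <= Q * (C / (6*lam+2))).
  { replace (Q * (C / (6 * lam + 2))) with (C * (Q / (6*lam+2))) by (field; lra).
    assert (1 <= Q / (6*lam+2)) by (apply (Rmult_le_reg_r (6*lam+2)); [lra|]; field_simplify; lra).
    nra. }
  assert (HQB : Q * M < Q * stability_const delta lam C + (8*lam + 1 + 4*S)*e)
    by (unfold stability_const, Q in *; lra).
  fold P S Q. apply Rlt_le. apply (Rmult_lt_reg_l Q); [lra|].
  replace (Q * (stability_const delta lam C + (8 * lam + 1 + 4 * S) / Q * e))
    with (Q * stability_const delta lam C + (8 * lam + 1 + 4 * S) * e) by (field; lra). lra.
Qed.
Section Stability.
Context {X : Type} (d : X -> X -> R) (Hm : is_metric d) (delta : R)
  (Hthin : triangles_thin d delta) (Hgeo : geodesic_space d) (Hd0 : 0 <= delta)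
  (lam C : R) (Hlam : 1 <= lam) (HC : 0 <= C)
  (c : R -> X) (s0 s1 : R) (Hs01 : s0 <= s1)
  (Hc : forall s, s0 <= s <= s1 -> forall eps, 0 < eps -> exists eta, 0 < eta /\
        forall s', s0 <= s' <= s1 -> Rabs (s - s') < eta -> d (c s) (c s') < eps)
  (Hchain : forall s r, s0 <= s -> s <= r -> r <= s1 -> forall tau n, partition s r tau n ->
        psum d c tau n <= lam * d (c s) (c r) + C).

(* Subdividing c on [ta,tb] into 2^k pieces and applying the shadow lemma:
   a geodesic from c ta to c tb stays within
   k delta + (lam d(c ta, c tb) + C + eps) / (2 (2^k - 1)) of the path. *)
Lemma geodesic_near_subpath_forward (k : nat) ta tb : 1 < 2 ^ k -> s0 <= ta -> ta <= tb -> tb <= s1 ->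
  forall h, geodesic d (c ta) (c tb) h -> forall s', 0 <= s' <= d (c ta) (c tb) ->
  forall eps, 0 < eps -> exists tau, s0 <= tau <= s1 /\
  d (h s') (c tau) <= INR k * delta + (lam * d (c ta) (c tb) + C + eps) / (2 * (2 ^ k - 1)).
Proof.
  intros Hk Hta Hab Htb h Hh s' Hs' eps Heps.
  set (W := lam * d (c ta) (c tb) + C).
  assert (HW0 : 0 <= W) by (unfold W; pose proof (dist_nonneg d Hm (c ta) (c tb)); nra).
  set (eta := (W + eps) / (2 ^ k - 1)).
  assert (Heta : 0 < eta) by (unfold eta; apply Rdiv_lt_0_compat; lra).
  destruct (fine_partition d Hm c ta tb
     ltac:(intros s Hs e He; destruct (Hc s ltac:(lra) e He) as [et [Het Hh']];
           exists et; split; auto; intros; apply Hh'; auto; lra)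
     eta Heta (2 ^ k) ta W ltac:(lra)
     ltac:(intros tau n Hp; apply Hchain; auto)) as [tau [n [Hp [Hgap Hn]]]].
  { rewrite pow_INR. replace (INR 2) with 2 by (simpl; lra). unfold eta.
    apply (Rmult_lt_reg_r (2 ^ k - 1)); [lra|]. field_simplify; [|lra]. nra. }
  pose proof Hp as [H0 [Hn' _]].
  assert (Hh2 : geodesic d (c (tau O)) (c (tau n)) h) by (rewrite H0, Hn'; auto).
  assert (Hs2 : 0 <= s' <= d (c (tau O)) (c (tau n))) by (rewrite H0, Hn'; auto).
  destruct (chain_shadow d Hm delta Hthin Hgeo Hd0 k (fun i => c (tau i)) n eta Hn ltac:(lra)
     Hgap h Hh2 s' Hs2) as [i [Hi Hd]].
  exists (tau i). pose proof (partition_bounds _ _ _ _ Hp i Hi). split; [lra|].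
  unfold eta, W in *.
  replace ((lam * d (c ta) (c tb) + C + eps) / (2 * (2 ^ k - 1)))
    with ((lam * d (c ta) (c tb) + C + eps) / (2 ^ k - 1) / 2) by (field; lra). lra.
Qed.

Lemma geodesic_near_subpath (k : nat) ta tb : 1 < 2 ^ k -> s0 <= ta <= s1 -> s0 <= tb <= s1 ->
  forall h, geodesic d (c ta) (c tb) h -> forall s', 0 <= s' <= d (c ta) (c tb) ->
  forall eps, 0 < eps -> exists tau, s0 <= tau <= s1 /\
  d (h s') (c tau) <= INR k * delta + (lam * d (c ta) (c tb) + C + eps) / (2 * (2 ^ k - 1)).
Proof.
  intros Hk Ha Hb h Hh s' Hs' eps Heps.
  destruct (Rle_or_lt ta tb) as [Hab|Hab]; [apply geodesic_near_subpath_forward; auto; lra|].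
  (* otherwise run the forward case on the reversed geodesic *)
  pose proof (geodesic_reverse d Hm _ _ _ Hh) as Hr.
  destruct (geodesic_near_subpath_forward k tb ta Hk ltac:(lra) ltac:(lra) ltac:(lra) _ Hr
    (d (c ta) (c tb) - s') ltac:(rewrite (dist_sym d Hm (c tb)); lra) eps Heps) as [tau [Ht Hd]].
  exists tau. split; auto. unfold reverse_path in Hd.
  replace (d (c ta) (c tb) - (d (c ta) (c tb) - s')) with s' in Hd by ring.
  rewrite (dist_sym d Hm (c tb)) in Hd. auto.
Qed.

(* Key step of Claim 1.  Let M bound, up to e, the distance from points of a
   geodesic gam from c s0 to c s1 to the path, and let gam se be at distance
   > M - e from the whole path, away from the ends.  Points em, ep of gam at
   distance r = 4 delta + 3 e on both sides of gam se lie near c ta, c tb;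
   thinness of the quadrilateral (em, ep, c tb, c ta) forces gam se near the
   geodesic [c ta, c tb], hence near the path, which bounds M. *)
Lemma far_point_bound gam (Hg : geodesic d (c s0) (c s1) gam) (k : nat)
  (Hk1 : 4*lam+2 <= 2 ^ k) (Hk2 : 2 ^ k <= 8*lam+4) (Hk3 : INR k <= 2 ^ k / 4 + 1)
  M e (He : 0 < e)
  (Hnear : forall sg, 0 <= sg <= d (c s0) (c s1) ->
     exists tau, s0 <= tau <= s1 /\ d (gam sg) (c tau) < M + e)
  se (Hlo : 4 * delta + 3 * e < se) (Hhi : se < d (c s0) (c s1) - (4 * delta + 3 * e))
  (Hfar : forall tau, s0 <= tau <= s1 -> M - e < d (gam se) (c tau)) :
  M <= stability_const delta lam C + (8*lam + 1 + 4*(2 ^ k - 1)) / (2*(2 ^ k - 1) - 2*lam) * e.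
Proof.
  set (r := 4 * delta + 3 * e) in *.
  assert (Hr : r = 4 * delta + 3 * e) by reflexivity.
  set (e0 := gam se). set (em := gam (se - r)). set (ep := gam (se + r)).
  assert (Dm : d e0 em = r).
  { unfold e0, em. rewrite (geodesic_isometry d _ _ _ Hg) by lra. rewrite Rabs_right; lra. }
  assert (Dp : d e0 ep = r).
  { unfold e0, ep. rewrite (geodesic_isometry d _ _ _ Hg) by lra. rewrite Rabs_left1; lra. }
  destruct (Hnear (se - r) ltac:(lra)) as [ta [Hta Hda]]. fold em in Hda.
  destruct (Hnear (se + r) ltac:(lra)) as [tb [Htb Hdb]]. fold ep in Hdb.
  destruct (geodesic_restrict d _ _ _ (se - r) (se + r) Hg ltac:(lra) ltac:(lra) ltac:(lra))
    as [Dmp Hg']. fold em ep in Dmp, Hg'.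
  assert (He0 : gam (se - r + r) = e0) by (unfold e0; f_equal; ring).
  specialize (Hfar ta Hta) as Hfa. specialize (Hfar tb Htb) as Hfb. fold e0 in Hfa, Hfb.
  destruct (Hgeo em (c ta)) as [h1 Hh1]. destruct (Hgeo ep (c ta)) as [h2 Hh2].
  (* e0 is delta-close to [ep, c ta] (it is too far from [em, c ta]) ... *)
  destruct (thin_slim d Hm delta Hthin _ _ _ _ _ _ Hg' Hh1 Hh2 r ltac:(lra))
    as [p [[[s [Hs ->]]|[s [Hs ->]]] Hp]]; rewrite He0 in Hp.
  { exfalso.
    pose proof (geodesic_from_start d Hm _ _ _ Hh1 s Hs).
    pose proof (geodesic_to_end d Hm _ _ _ Hh1 s Hs).
    pose proof (dist_tri d Hm e0 (h1 s) em). pose proof (dist_tri d Hm e0 (h1 s) (c ta)).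
    rewrite (dist_sym d Hm (h1 s) em) in *. lra. }
  destruct (Hgeo ep (c tb)) as [h3 Hh3]. destruct (Hgeo (c ta) (c tb)) as [h4 Hh4].
  (* ... hence 2 delta-close to [c ta, c tb] (it is too far from [ep, c tb]) *)
  destruct (thin_slim d Hm delta Hthin _ _ _ _ _ _ Hh2 Hh3 Hh4 s Hs)
    as [p' [[[s' [Hs' ->]]|[s' [Hs' ->]]] Hp']].
  { exfalso.
    pose proof (geodesic_from_start d Hm _ _ _ Hh3 s' Hs').
    pose proof (geodesic_to_end d Hm _ _ _ Hh3 s' Hs').
    pose proof (dist_tri d Hm e0 (h2 s) (h3 s')).
    pose proof (dist_tri d Hm e0 (h3 s') ep). pose proof (dist_tri d Hm e0 (h3 s') (c tb)).
    rewrite (dist_sym d Hm (h3 s') ep) in *. lra. }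
  destruct (geodesic_near_subpath k ta tb ltac:(lra) Hta Htb h4 Hh4 s' Hs' e He)
    as [tau [Ht Hd]].
  specialize (Hfar tau Ht). fold e0 in Hfar.
  pose proof (dist_tri d Hm e0 (h2 s) (h4 s')). pose proof (dist_tri d Hm e0 (h4 s') (c tau)).
  pose proof (dist_tri d Hm (c ta) em ep). pose proof (dist_tri d Hm (c ta) ep (c tb)).
  rewrite (dist_sym d Hm (c ta) em) in *.
  apply (stability_algebra delta lam C k M e (d (c ta) (c tb))); auto; lra.
Qed.

Lemma geodesic_path_distance_sup gam : geodesic d (c s0) (c s1) gam ->
  exists M,
    (forall sg, 0 <= sg <= d (c s0) (c s1) -> forall e, 0 < e ->
       exists tau, s0 <= tau <= s1 /\ d (gam sg) (c tau) < M + e) /\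
    (forall e, 0 < e -> exists sg, 0 <= sg <= d (c s0) (c s1) /\
       forall tau, s0 <= tau <= s1 -> M - e < d (gam sg) (c tau)).
Proof.
  intros Hg. set (L := d (c s0) (c s1)).
  set (E := fun r => exists sg, 0 <= sg <= L /\
              forall tau, s0 <= tau <= s1 -> r <= d (gam sg) (c tau)).
  assert (HB : bound E).
  { exists L. intros r [sg [Hsg Hr]]. specialize (Hr s0 ltac:(lra)).
    rewrite (dist_sym d Hm), (geodesic_from_start d Hm _ _ _ Hg) in Hr by auto. lra. }
  assert (HE : exists r, E r).
  { exists 0, 0. split; [split; [lra|apply (dist_nonneg d Hm)]|].
    intros. apply (dist_nonneg d Hm). }
  destruct (completeness E HB HE) as [M [Hub Hlub]].
  exists M. split.
  - intros sg Hsg e He. apply NNPP. intro N.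
    assert (HME : E (M + e)).
    { exists sg. split; auto. intros tau Ht.
      destruct (Rle_or_lt (M + e) (d (gam sg) (c tau))) as [H|H]; auto.
      exfalso. apply N. exists tau. split; auto. }
    specialize (Hub _ HME). lra.
  - intros e He. apply NNPP. intro N.
    assert (Hu : is_upper_bound E (M - e)).
    { intros r [sg [Hsg Hr]]. destruct (Rle_or_lt r (M - e)) as [H|H]; auto.
      exfalso. apply N. exists sg. split; auto. intros tau Ht. specialize (Hr tau Ht). lra. }
    specialize (Hlub _ Hu). lra.
Qed.

Lemma geodesic_near_path gam : geodesic d (c s0) (c s1) gam ->
  forall sig, 0 <= sig <= d (c s0) (c s1) -> forall eps, 0 < eps ->
  exists tau, s0 <= tau <= s1 /\ d (gam sig) (c tau) <= stability_const delta lam C + eps.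
Proof.
  intros Hg. set (L := d (c s0) (c s1)).
  assert (HL : 0 <= L) by apply (dist_nonneg d Hm).
  destruct (geodesic_path_distance_sup gam Hg) as [M [Hnear Hfar]]. fold L in Hnear, Hfar.
  destruct (subdivision_exponent lam Hlam) as [k [Hk1 [Hk2 Hk3]]].
  set (K := (8*lam + 1 + 4*(2 ^ k - 1)) / (2*(2 ^ k - 1) - 2*lam)).
  assert (HK : 0 <= K) by (apply Rdiv_le_0_compat; lra).
  assert (HBc : 4 * delta <= stability_const delta lam C).
  { unfold stability_const.
    assert (0 <= C / (6*lam+2)) by (apply Rdiv_le_0_compat; lra). nra. }
  (* M <= Bc + (4 + K) e for every e > 0: a far point either lies near an end
     of gam, or far_point_bound applies *)
  assert (HM : M <= stability_const delta lam C).
  { apply Rle_plus_epsilon. intros eps Heps.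
    set (e := eps / (4 + K)).
    assert (He : 0 < e) by (apply Rdiv_lt_0_compat; lra).
    assert (Heps' : eps = 4 * e + K * e) by (unfold e; field; lra).
    destruct (Hfar e He) as [se [Hse Hfar_se]].
    destruct (Rle_or_lt se (4 * delta + 3 * e)) as [H1|H1].
    { specialize (Hfar_se s0 ltac:(lra)).
      rewrite (dist_sym d Hm), (geodesic_from_start d Hm _ _ _ Hg) in Hfar_se by auto. nra. }
    destruct (Rle_or_lt (L - se) (4 * delta + 3 * e)) as [H2|H2].
    { specialize (Hfar_se s1 ltac:(lra)).
      rewrite (geodesic_to_end d Hm _ _ _ Hg) in Hfar_se by auto. fold L in Hfar_se. nra. }
    pose proof (far_point_bound gam Hg k Hk1 Hk2 Hk3 M e He
      (fun sg Hsg => Hnear sg Hsg e He) se H1 ltac:(unfold L in H2; lra) Hfar_se) as Hfp.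
    fold K in Hfp. nra. }
  intros sg Hsg eps Heps. destruct (Hnear sg Hsg eps Heps) as [tau [Ht Hd]].
  exists tau. split; auto. lra.
Qed.

End Stability.
Section ImageTriangles.
Context {Y X : Type} (dY : Y -> Y -> R) (dX : X -> X -> R)
  (HmY : is_metric dY) (HmX : is_metric dX) (HgX : geodesic_space dX)
  (lam C delta : R) (f : Y -> X) (Hlam : 1 <= lam) (HC : 0 <= C) (Hd0 : 0 <= delta)
  (Hf : m_continuous dY dX f)
  (Hlen : forall y y' (g : R -> Y), geodesic dY y y' g ->
     rectifiable dX (fun t => f (g t)) 0 (dY y y') /\
     path_length dX (fun t => f (g t)) 0 (dY y y') <= lam * dX (f y) (f y') + C)
  (Hthin : triangles_thin dX delta).

Let B := stability_const delta lam C.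

(* Hypothesis (ii) applied to subsegments gives the chain inequality. *)
Lemma image_chain_ineq y y' g s r tau n : geodesic dY y y' g -> 0 <= s -> s <= r -> r <= dY y y' ->
  partition s r tau n -> psum dX (fun t => f (g t)) tau n <= lam * dX (f (g s)) (f (g r)) + C.
Proof.
  intros Hg Hs Hsr Hr Hp.
  destruct (geodesic_restrict dY y y' g s r Hg Hs Hsr Hr) as [E Hg'].
  destruct (Hlen _ _ _ Hg') as [Hrect Hl]. rewrite E in Hrect, Hl.
  assert (Hp' : partition 0 (r - s) (fun i => tau i - s) n).
  { destruct Hp as [H0 [Hn Hmono]]. split; [|split]; [rewrite H0; ring|rewrite Hn; ring|].
    intros i Hi. specialize (Hmono i Hi). lra. }
  rewrite (psum_ext dX (fun t => f (g t)) (fun t => f (g (s + t))) tau (fun i => tau i - s));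
    [eapply Rle_trans; [apply psum_le_path_length; eauto|auto]|].
  intros i Hi. do 2 f_equal. ring.
Qed.

Lemma image_path_continuous y y' g : geodesic dY y y' g -> forall lo hi, 0 <= lo -> hi <= dY y y' ->
  forall s, lo <= s <= hi -> forall eps, 0 < eps -> exists eta, 0 < eta /\
  forall s', lo <= s' <= hi -> Rabs (s - s') < eta -> dX (f (g s)) (f (g s')) < eps.
Proof.
  intros Hg lo hi Hlo Hhi s Hs eps He. destruct (Hf (g s) eps He) as [eta [Heta H]].
  exists eta. split; auto. intros s' Hs' Hd. apply H.
  rewrite (geodesic_isometry dY y y' g Hg) by lra. auto.
Qed.

Lemma geodesic_near_image y y' g : geodesic dY y y' g ->
  forall lo hi, 0 <= lo -> lo <= hi -> hi <= dY y y' ->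
  forall gam, geodesic dX (f (g lo)) (f (g hi)) gam ->
  forall sig, 0 <= sig <= dX (f (g lo)) (f (g hi)) -> forall eps, 0 < eps ->
  exists tau, lo <= tau <= hi /\ dX (gam sig) (f (g tau)) <= B + eps.
Proof.
  intros Hg lo hi H0 H1 H2.
  apply (geodesic_near_path dX HmX delta Hthin HgX Hd0 lam C Hlam HC (fun t => f (g t)) lo hi H1
     (image_path_continuous y y' g Hg lo hi H0 H2)).
  intros s r Hs Hsr Hr tau n Hp. apply (image_chain_ineq y y' g s r tau n Hg); auto; lra.
Qed.

(* Converse direction: a point m = f (g t) of the image of a geodesic of Y is
   close to the internal point of the side [f x, f y] of the X-triangle
   (f x, m, f y).  Its internal points on [f x, m] and [m, f y] are at
   distance h from m and near the image path (Claim 1); the chain inequality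
   through m then bounds h. *)
Lemma image_near_geodesic x y g (Hg : geodesic dY x y g) t (Ht : 0 <= t <= dY x y)
  guv (Huv : geodesic dX (f x) (f y) guv) e (He : 0 < e) :
  exists sg, 0 <= sg <= dX (f x) (f y) /\
    dX (f (g t)) (guv sg) <= (lam + 1) * (B + e) + (lam / 2 + 1) * delta + C / 2.
Proof.
  pose proof Hg as [G0 [G1 _]].
  set (u := f x) in *. set (v := f y) in *. set (m := f (g t)).
  destruct (HgX u m) as [gum Hum]. destruct (HgX m v) as [gmv Hmv].
  destruct (thin_internal_points dX HmX delta Hthin _ _ _ _ _ _ Hum Huv Hmv) as [Cc1 Cc2].
  set (sg := br_x dX u m v) in *. set (h := br_y dX u m v) in *.
  pose proof (dist_tri dX HmX u m v). pose proof (dist_tri dX HmX m u v).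
  pose proof (dist_tri dX HmX u v m).
  rewrite (dist_sym dX HmX m u), (dist_sym dX HmX v m) in *.
  assert (Hsg : 0 <= sg <= dX u m) by (unfold sg, h, br_x, br_y in *; lra).
  assert (Hh : 0 <= h <= dX m v) by (unfold sg, h, br_x, br_y in *; lra).
  assert (Hsh : sg + h = dX u m) by (unfold sg, h, br_x, br_y; field).
  exists sg. split; [unfold sg, br_x in *; lra|].
  assert (Hum' : geodesic dX (f (g 0)) (f (g t)) gum) by (rewrite G0; auto).
  destruct (geodesic_near_image x y g Hg 0 t ltac:(lra) ltac:(lra) ltac:(lra) gum Hum' sg
    ltac:(rewrite G0; auto) e He) as [ta [Hta Hda]].
  assert (Hmv' : geodesic dX (f (g t)) (f (g (dY x y))) gmv) by (rewrite G1; auto).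
  destruct (geodesic_near_image x y g Hg t (dY x y) ltac:(lra) ltac:(lra) ltac:(lra) gmv Hmv' h
    ltac:(rewrite G1; auto) e He) as [tb [Htb Hdb]].
  pose proof (image_chain_ineq x y g ta tb (three_points ta t tb) 2 Hg ltac:(lra) ltac:(lra)
    ltac:(lra) (partition_three_points ta t tb ltac:(lra) ltac:(lra))) as Hci.
  simpl in Hci. fold m in Hci.
  pose proof (geodesic_to_end dX HmX _ _ _ Hum sg Hsg).
  pose proof (geodesic_from_start dX HmX _ _ _ Hmv h Hh).
  pose proof (dist_tri dX HmX (gum sg) (f (g ta)) m).
  pose proof (dist_tri dX HmX m (f (g tb)) (gmv h)).
  pose proof (dist_tri dX HmX (f (g ta)) (gum sg) (f (g tb))).
  pose proof (dist_tri dX HmX (gum sg) (gmv h) (f (g tb))).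
  pose proof (dist_tri dX HmX m (gum sg) (guv sg)).
  rewrite (dist_sym dX HmX (f (g ta)) (gum sg)), (dist_sym dX HmX (f (g tb)) (gmv h)),
    (dist_sym dX HmX m (gum sg)) in *.
  assert (Hab : dX (f (g ta)) (f (g tb)) <= 2 * (B + e) + delta) by lra.
  assert (lam * dX (f (g ta)) (f (g tb)) <= lam * (2 * (B + e) + delta))
    by (apply Rmult_le_compat_l; lra).
  lra.
Qed.

(* A point of the side [f x, f y] of the X-triangle (f x, f y, f z) is
   delta-close to another side, hence (Claim 1) close to the image of the
   corresponding side of the Y-triangle. *)
Lemma side_near_other_images x y z gxz gyz (G2 : geodesic dY x z gxz) (G3 : geodesic dY y z gyz)
  guv (Huv : geodesic dX (f x) (f y) guv) sg (Hsg : 0 <= sg <= dX (f x) (f y))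
  e (He : 0 < e) :
  exists q, on_other_sides dY x y z gxz gyz q /\ dX (guv sg) (f q) <= delta + B + e.
Proof.
  pose proof G2 as [G20 [G21 _]]. pose proof G3 as [G30 [G31 _]].
  destruct (HgX (f x) (f z)) as [guw Huw]. destruct (HgX (f y) (f z)) as [gvw Hvw].
  destruct (thin_slim dX HmX delta Hthin _ _ _ _ _ _ Huv Huw Hvw sg Hsg)
    as [p [[[s [Hs ->]]|[s [Hs ->]]] Hp]].
  - assert (Huw' : geodesic dX (f (gxz 0)) (f (gxz (dY x z))) guw) by (rewrite G20, G21; auto).
    destruct (geodesic_near_image x z gxz G2 0 (dY x z) ltac:(lra)
      ltac:(apply (dist_nonneg dY HmY)) ltac:(lra) guw Huw' s ltac:(rewrite G20, G21; auto) e He)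
      as [tq [Htq Hdq]].
    exists (gxz tq). split; [left; exists tq; split; auto; lra|].
    pose proof (dist_tri dX HmX (guv sg) (guw s) (f (gxz tq))). lra.
  - assert (Hvw' : geodesic dX (f (gyz 0)) (f (gyz (dY y z))) gvw) by (rewrite G30, G31; auto).
    destruct (geodesic_near_image y z gyz G3 0 (dY y z) ltac:(lra)
      ltac:(apply (dist_nonneg dY HmY)) ltac:(lra) gvw Hvw' s ltac:(rewrite G30, G31; auto) e He)
      as [tq [Htq Hdq]].
    exists (gyz tq). split; [right; exists tq; split; auto; lra|].
    pose proof (dist_tri dX HmX (guv sg) (gvw s) (f (gyz tq))). lra.
Qed.

Lemma image_triangle_slim x y z gxy gxz gyz :
  geodesic dY x y gxy -> geodesic dY x z gxz -> geodesic dY y z gyz ->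
  forall t, 0 <= t <= dY x y -> forall eps, 0 < eps -> exists q,
    on_other_sides dY x y z gxz gyz q /\ dX (f (gxy t)) (f q) <= slim_const lam C delta + eps.
Proof.
  intros G1 G2 G3 t Ht eps Heps.
  set (e := eps / (lam + 2)).
  assert (He : 0 < e) by (unfold e; apply Rdiv_lt_0_compat; lra).
  destruct (HgX (f x) (f y)) as [guv Huv].
  destruct (image_near_geodesic x y gxy G1 t Ht guv Huv e He) as [sg [Hsg Hm]].
  destruct (side_near_other_images x y z gxz gyz G2 G3 guv Huv sg Hsg e He) as [q [Hq Hdq]].
  exists q. split; auto.
  pose proof (dist_tri dX HmX (f (gxy t)) (guv sg) (f q)).
  rewrite <- (slim_const_eq lam C delta Hlam). fold B.
  replace eps with ((lam + 2) * e) by (unfold e; field; lra). lra.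
Qed.

End ImageTriangles.
Definition triangles_slim {Y : Type} (d : Y -> Y -> R) (D : R) : Prop :=
  forall x y z gxy gxz gyz, geodesic d x y gxy -> geodesic d x z gxz -> geodesic d y z gyz ->
  forall t, 0 <= t <= d x y -> forall eps, 0 < eps ->
  exists q, on_other_sides d x y z gxz gyz q /\ d (gxy t) q <= D + eps.

Section SlimToThin.
Context {Y : Type} (d : Y -> Y -> R) (Hm : is_metric d) (D : R) (HD : 0 <= D)
  (Hslim : triangles_slim d D).

Lemma close_to_same_parameter v u w g1 g2 : geodesic d v u g1 -> geodesic d v w g2 ->
  forall t s r, 0 <= t <= d v u -> 0 <= t <= d v w -> 0 <= s <= d v w ->
  d (g1 t) (g2 s) <= r -> d (g1 t) (g2 t) <= 2 * r.
Proof.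
  intros G1 G2 t s r Ht1 Ht2 Hs Hr.
  pose proof (geodesic_from_start d Hm _ _ _ G1 t Ht1).
  pose proof (geodesic_from_start d Hm _ _ _ G2 s Hs).
  pose proof (dist_tri d Hm v (g1 t) (g2 s)). pose proof (dist_tri d Hm v (g2 s) (g1 t)).
  pose proof (dist_tri d Hm (g1 t) (g2 s) (g2 t)).
  rewrite (dist_sym d Hm (g2 s) (g1 t)) in *.
  rewrite (geodesic_isometry d _ _ _ G2 s t) in * by lra.
  assert (Rabs (s - t) <= r) by (apply Rabs_le; lra). lra.
Qed.

(* If neither is close to
   the other leg, both are close to the third side [u,w], where their nearby
   points are 2D-close by distance counting. *)
Lemma slim_leg_bound v u w g1 g2 g3 :
  geodesic d v u g1 -> geodesic d v w g2 -> geodesic d u w g3 ->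
  forall t, 0 <= t -> t <= (d v u + d v w - d u w) / 2 -> d (g1 t) (g2 t) <= 4 * D.
Proof.
  intros G1 G2 G3 t Ht0 Ht.
  pose proof (dist_tri d Hm v w u). pose proof (dist_tri d Hm v u w).
  rewrite (dist_sym d Hm w u) in *.
  assert (Ht1 : 0 <= t <= d v u) by lra. assert (Ht2 : 0 <= t <= d v w) by lra.
  apply Rle_plus_epsilon. intros eps Heps.
  set (e := eps / 4). assert (He : 0 < e) by (unfold e; lra).
  assert (Hfin : 2 * (D + e) <= 4 * D + eps) by (unfold e; lra).
  destruct (Hslim _ _ _ _ _ _ G1 G2 G3 t Ht1 e He) as [p1 [[[s [Hs ->]]|[s1 [Hs1 ->]]] Hp1]].
  { pose proof (close_to_same_parameter v u w g1 g2 G1 G2 t s _ Ht1 Ht2 Hs Hp1). lra. }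
  pose proof (geodesic_reverse d Hm _ _ _ G3) as G3r.
  destruct (Hslim _ _ _ _ _ _ G2 G1 G3r t Ht2 e He) as [p2 [[[s [Hs ->]]|[s2 [Hs2 ->]]] Hp2]].
  { pose proof (close_to_same_parameter v w u g2 g1 G2 G1 t s _ Ht2 Ht1 Hs Hp2).
    rewrite (dist_sym d Hm (g2 t)) in *. lra. }
  unfold reverse_path in Hp2. rewrite (dist_sym d Hm w u) in *.
  set (q2 := d u w - s2) in *.
  assert (Hq2 : 0 <= q2 <= d u w) by (unfold q2; lra).
  pose proof (geodesic_from_start d Hm _ _ _ G1 t Ht1). pose proof (geodesic_to_end d Hm _ _ _ G1 t Ht1).
  pose proof (geodesic_from_start d Hm _ _ _ G2 t Ht2). pose proof (geodesic_to_end d Hm _ _ _ G2 t Ht2).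
  pose proof (geodesic_from_start d Hm _ _ _ G3 s1 Hs1). pose proof (geodesic_to_end d Hm _ _ _ G3 s1 Hs1).
  pose proof (geodesic_from_start d Hm _ _ _ G3 q2 Hq2). pose proof (geodesic_to_end d Hm _ _ _ G3 q2 Hq2).
  pose proof (dist_tri d Hm u (g1 t) (g3 s1)).
  pose proof (dist_tri d Hm v (g1 t) w). pose proof (dist_tri d Hm (g1 t) (g3 s1) w).
  pose proof (dist_tri d Hm u (g3 s1) (g1 t)).
  pose proof (dist_tri d Hm (g3 q2) (g2 t) w).
  pose proof (dist_tri d Hm v (g2 t) u). pose proof (dist_tri d Hm (g2 t) (g3 q2) u).
  pose proof (dist_tri d Hm (g2 t) (g3 q2) w).
  pose proof (dist_tri d Hm (g1 t) (g3 s1) (g2 t)).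
  pose proof (dist_tri d Hm (g3 s1) (g3 q2) (g2 t)).
  rewrite (geodesic_isometry d _ _ _ G3 s1 q2) in * by lra.
  rewrite (dist_sym d Hm (g1 t) u), (dist_sym d Hm (g3 s1) (g1 t)), (dist_sym d Hm (g2 t) u),
    (dist_sym d Hm (g3 q2) u), (dist_sym d Hm (g3 q2) (g2 t)), (dist_sym d Hm (g2 t) w) in *.
  assert (Rabs (s1 - q2) <= 2 * (D + e)) by (apply Rabs_le; lra). unfold e in *. lra.
Qed.

(* Thinness: pairs of points with the same tripod image lie on two legs at
   the same distance from a common vertex, so slim_leg_bound applies to the
   triangle relabelled at x, y or z. *)
Lemma slim_triangles_thin x y z gxy gxz gyz :
  geodesic d x y gxy -> geodesic d x z gxz -> geodesic d y z gyz ->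
  thin_triangle d x y z gxy gxz gyz (4 * D).
Proof.
  intros G1 G2 G3.
  pose proof (dist_tri d Hm x y z). pose proof (dist_tri d Hm y x z).
  pose proof (dist_tri d Hm x z y).
  rewrite (dist_sym d Hm y x), (dist_sym d Hm z y) in *.
  assert (Leg_x : forall t1 t2, t1 = t2 -> 0 <= t1 -> t1 <= br_x d x y z ->
    d (gxy t1) (gxz t2) <= 4 * D).
  { intros t1 t2 -> Ha Hb. apply (slim_leg_bound x y z gxy gxz gyz); auto. }
  assert (Leg_y : forall t1 t2, d x y - t1 = t2 -> 0 <= t2 -> t2 <= br_y d x y z ->
    d (gxy t1) (gyz t2) <= 4 * D).
  { intros t1 t2 E Ha Hb. pose proof (geodesic_reverse d Hm _ _ _ G1) as G1r.
    pose proof (slim_leg_bound y x z _ gyz gxz G1r G3 G2 t2 Ha) as V.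
    unfold reverse_path in V. replace (d x y - t2) with t1 in V by lra. apply V.
    rewrite (dist_sym d Hm y x). unfold br_y in Hb. lra. }
  assert (Leg_z : forall t1 t2, d x z - t1 = d y z - t2 -> 0 <= d x z - t1 ->
    d x z - t1 <= (d x z + d y z - d x y) / 2 -> d (gxz t1) (gyz t2) <= 4 * D).
  { intros t1 t2 E Ha Hb. pose proof (geodesic_reverse d Hm _ _ _ G2) as G2r.
    pose proof (geodesic_reverse d Hm _ _ _ G3) as G3r.
    pose proof (slim_leg_bound z x y _ _ gxy G2r G3r G1 (d x z - t1) Ha) as V.
    unfold reverse_path in V. replace (d x z - (d x z - t1)) with t1 in V by ring.
    replace (d y z - (d x z - t1)) with t2 in V by lra. apply V.
    rewrite (dist_sym d Hm z x), (dist_sym d Hm z y). lra. }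
  assert (Hbx : br_x d x y z = (d x y + d x z - d y z) / 2) by reflexivity.
  assert (Hby : br_y d x y z = (d x y + d y z - d x z) / 2) by reflexivity.
  intros k1 k2 t1 t2 Hk1 Hk2 Ht1 Ht2 Heq.
  destruct k1 as [|[|[|k1]]]; try lia; destruct k2 as [|[|[|k2]]]; try lia;
  simpl in Ht1, Ht2, Heq |- *; unfold tripod_image in Heq;
  repeat match type of Heq with context [Rle_dec ?a ?b] => destruct (Rle_dec a b) end;
  unfold tripod_eq in Heq; simpl in Heq; destruct Heq as [Hs [Hf|Hf]];
  try discriminate Hf;
  first [ (assert (t1 = t2) by lra; subst t2; rewrite dist_self by auto; lra)
        | (apply Leg_x; lra) | (rewrite dist_sym by auto; apply Leg_x; lra)
        | (apply Leg_y; lra) | (rewrite dist_sym by auto; apply Leg_y; lra)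
        | (apply Leg_z; lra) | (rewrite dist_sym by auto; apply Leg_z; lra)
        | lra ].
Qed.

End SlimToThin.

Lemma slim_pullback {Y X : Type} (dY : Y -> Y -> R) (dX : X -> X -> R) (f : Y -> X)
  (a b H : R) : 0 < a ->
  (forall y y', dX (f y) (f y') >= a * dY y y' - b) ->
  (forall x y z gxy gxz gyz, geodesic dY x y gxy -> geodesic dY x z gxz -> geodesic dY y z gyz ->
    forall t, 0 <= t <= dY x y -> forall eps, 0 < eps -> exists q,
    on_other_sides dY x y z gxz gyz q /\ dX (f (gxy t)) (f q) <= H + eps) ->
  triangles_slim dY ((H + b) / a).
Proof.
  intros Ha Hi Himg x y z gxy gxz gyz G1 G2 G3 t Ht eps Heps.
  destruct (Himg x y z gxy gxz gyz G1 G2 G3 t Ht (eps * a) ltac:(nra)) as [q [Hq Hd]].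
  exists q. split; auto. specialize (Hi (gxy t) q).
  apply (Rmult_le_reg_l a); auto.
  replace (a * ((H + b) / a + eps)) with (H + b + eps * a) by (field; lra). lra.
Qed.

Theorem mainTheorem19 (Y X : Type) (dY : Y -> Y -> R) (dX : X -> X -> R)
  (a b lam C delta : R) (f : Y -> X) :
  is_metric dY -> proper_space dY -> geodesic_space dY ->
  is_metric dX -> proper_space dX -> geodesic_space dX ->
  0 < a -> 0 <= b -> 1 <= lam -> 0 <= C ->
  m_continuous dY dX f ->
  (forall y y', dX (f y) (f y') >= a * dY y y' - b) ->
  (forall y y' (g : R -> Y), geodesic dY y y' g ->
     rectifiable dX (fun t => f (g t)) 0 (dY y y') /\
     path_length dX (fun t => f (g t)) 0 (dY y y') <= lam * dX (f y) (f y') + C) ->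
  hyperbolic dX delta ->
  let delta'' := 4 / a * ((6 * lam ^ 2 + 14 * lam + 5) * delta
                          + (4 * lam + 3) / (6 * lam + 2) * C + b) in
  hyperbolic dY delta'' /\
  delta'' <= 4 / a * ((6 * lam ^ 2 + 14 * lam + 5) * delta + C + b).
Proof.
  intros HmY HpY HgY HmX HpX HgX Ha Hb Hlam HC Hf Hi Hlen Hhyp delta''.
  assert (Hcoef : 0 <= (4 * lam + 3) / (6 * lam + 2) <= 1).
  { split; [apply Rdiv_le_0_compat; lra|].
    apply (Rmult_le_reg_r (6*lam+2)); [lra|]. field_simplify; lra. }
  split.
  2:{ apply Rmult_le_compat_l; [apply Rdiv_le_0_compat; lra|]. nra. }
  split; [auto|split; [auto|]].
  intros x y z gxy gxz gyz G1 G2 G3.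
  pose proof (hyperbolic_const_nonneg dX HmX delta Hhyp (f x)) as Hd0.
  destruct Hhyp as [_ [_ Hthin]].
  assert (HH : 0 <= slim_const lam C delta).
  { unfold slim_const. assert (0 <= 6 * lam ^ 2 + 14 * lam + 5) by nra. nra. }
  (* Claim 2, pulled back to Y, makes triangles of Y slim, hence thin *)
  replace delta'' with (4 * ((slim_const lam C delta + b) / a))
    by (unfold delta'', slim_const; field; lra).
  apply (slim_triangles_thin dY HmY ((slim_const lam C delta + b) / a)); auto.
  { apply Rdiv_le_0_compat; lra. }
  apply (slim_pullback dY dX f a b _ Ha Hi).
  exact (image_triangle_slim dY dX HmY HmX HgX lam C delta f Hlam HC Hd0 Hf Hlen Hthin).
Qed.
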